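(* Assume $q<\ell$. Fix $Z_0\in S^{\ell}_{q,p}$ and $E_0\in\Lambda^{\ell}_{Z_0}$. Let $\mathcal{S}_0=\{E_0\}$ and for $j\ge1$ define inductively $$\mathcal{S}_j=\bigcup_{F\in\mathcal{S}_{j-1}}\{E\in N(\ell,m):\dim E=\ell,\ \dim(E\cap F)\ge\ell-1\}.$$ Then $$\bigcup_{E\in\mathcal{S}_q}Gr(q,E)=S^{\ell}_{q,p}.$$
   Context: Let $q<p$ and $q\le\ell\le(p+q)/2$ be positive integers, $m=p+q-\ell$. $Gr(q,p)$ is the Grassmannian of $q$-planes in $\mathbb{C}^{p+q}$; $\langle u,v\rangle_{\ell,m}=-\sum_{i=1}^{\ell}u_i\bar v_i+\sum_{i=\ell+1}^{p+q}u_i\bar v_i$; $S^{\ell}_{q,p}=\{Z\in Gr(q,p):\langle\cdot,\cdot\rangle_{\ell,m}|_Z=0\}$. $N(\ell,m)$ is the set of subspaces $F\subset\mathbb{C}^{p+q}$ with $\langle\cdot,\cdot\rangle_{\ell,m}|_F=0$, and for $F\in N(\ell,m)$ and $n\ge\dim F$, $\Lambda^n_F=\{E\in N(\ell,m):\dim E=n,\ F\subset E\}$. For a subspace $E$, $Gr(q,E)$ denotes the set of $q$-dimensional subspaces of $E$. *)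

(* Complex numbers are modelled by an arbitrary
   numClosedFieldType C. *)
From HB Require Import structures.
From mathcomp Require Import all_boot all_order all_algebra.
Set Implicit Arguments. Unset Strict Implicit. Unset Printing Implicit Defensive.
Import Order.TTheory GRing.Theory Num.Theory.
Local Open Scope ring_scope.

(* The Hermitian form <u,v>_{l,m} on C^n, n = p+q, m = n - l:
   - sum_{i<=l} u_i conj(v_i) + sum_{i>l} u_i conj(v_i)  (1-based in the paper,
   here indices are 0-based: i < l gets the minus sign). *)
Definition herm_form (C : numClosedFieldType) (n l : nat) (u v : 'rV[C]_n) : C :=
  \sum_(i < n) (if (i < l)%N then -1 else 1) * u 0 i * Num.conj (v 0 i).

Definition isotropic (C : numClosedFieldType) (n l : nat)
  (F : {vspace 'rV[C]_n}) : Prop :=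
  forall u v, u \in F -> v \in F -> herm_form l u v = 0.

Definition S_set (C : numClosedFieldType) (l q p : nat)
  (Z : {vspace 'rV[C]_(p + q)}) : Prop :=
  \dim Z = q /\ isotropic l Z.

Definition Lambda (C : numClosedFieldType) (N l n : nat)
  (F E : {vspace 'rV[C]_N}) : Prop :=
  isotropic l E /\ \dim E = n /\ (F <= E)%VS.

Fixpoint S_fam (C : numClosedFieldType) (N l : nat) (E0 : {vspace 'rV[C]_N})
  (j : nat) (E : {vspace 'rV[C]_N}) : Prop :=
  match j with
  | 0 => E = E0
  | j'.+1 => exists F, S_fam l E0 j' F /\
       isotropic l E /\ \dim E = l /\ (l - 1 <= \dim (E :&: F))%N
  end.

Definition Gr (C : numClosedFieldType) (N q : nat) (E Z : {vspace 'rV[C]_N}) : Prop :=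
  \dim Z = q /\ (Z <= E)%VS.

Arguments S_set {C} l q p Z.
Arguments Lambda {C N} l n F E.
Arguments S_fam {C N} l E0 j E.
Arguments Gr {C N} q E Z.
Arguments isotropic {C n} l F.
Arguments herm_form {C n} l u v.

(* Every member of S_j is an l-dimensional isotropic subspace, and any
   isotropic l-space F can be moved by one step so as to absorb a new
   isotropic vector z orthogonal to a given W <= F: replace F by
   (F ∩ z^⊥) + <z>, which is isotropic, meets F in codimension at most one,
   and has dimension exactly l because isotropic subspaces have dimension at
   most l (the negative-definite block forces them to inject into the first
   l coordinates).  Absorbing the q vectors of a basis of an isotropic q-plane
   one by one reaches a member of S_q containing it. *)
From HB Require Import structures.
From mathcomp Require Import all_boot all_order all_algebra.
From mathcomp Require Import ring.
Import Order.TTheory GRing.Theory Num.Theory.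
Local Open Scope ring_scope.

Set Implicit Arguments. Unset Strict Implicit.

Section HermForm.
Variables (C : numClosedFieldType) (n l : nat).
Implicit Types (u v w z : 'rV[C]_n) (U V F W : {vspace 'rV[C]_n}).

Lemma herm_formDl u v w :
  herm_form l (u + v) w = herm_form l u w + herm_form l v w.
Proof.
by rewrite /herm_form -big_split; apply: eq_bigr => i _; rewrite !mxE mulrDr mulrDl.
Qed.

Lemma herm_formZl a u w : herm_form l (a *: u) w = a * herm_form l u w.
Proof. by rewrite /herm_form mulr_sumr; apply: eq_bigr => i _; rewrite !mxE; ring. Qed.

Lemma herm_formC u v : herm_form l u v = (herm_form l v u)^*.
Proof.
rewrite /herm_form rmorph_sum; apply: eq_bigr => i _.
by rewrite !rmorphM /= conjCK; case: (i < l)%N; rewrite ?rmorphN1 ?rmorph1; ring.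
Qed.

Lemma herm_formDr u v w :
  herm_form l u (v + w) = herm_form l u v + herm_form l u w.
Proof.
by rewrite /herm_form -big_split; apply: eq_bigr => i _; rewrite !mxE rmorphD mulrDr.
Qed.

Lemma herm_formZr a u w : herm_form l u (a *: w) = a^* * herm_form l u w.
Proof.
by rewrite /herm_form mulr_sumr; apply: eq_bigr => i _; rewrite !mxE rmorphM /=; ring.
Qed.

Definition herm_dual z : 'Hom('rV[C]_n, 'rV[C]_1) :=
  linfun (mulmxr (\col_i ((if (i < l)%N then -1 else 1) * (z 0 i)^*))).

Definition orthv z : {vspace 'rV[C]_n} := lker (herm_dual z).

Lemma memv_orth z u : (u \in orthv z) = (herm_form l u z == 0).
Proof.
have dualE : herm_dual z u 0 0 = herm_form l u z.
  rewrite lfunE /= mxE /herm_form.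
  by apply: eq_bigr => i _; rewrite mxE mulrCA mulrA.
rewrite memv_ker -dualE; apply/eqP/eqP => [-> | u_z]; first by rewrite mxE.
by apply/rowP => j; rewrite ord1 u_z mxE.
Qed.

Lemma dimv_cap_orth z F : (\dim F <= (\dim (F :&: orthv z)).+1)%N.
Proof.
rewrite -(limg_ker_dim (herm_dual z) F) -[X in (_ <= X)%N]addn1 leq_add2l.
by rewrite (leq_trans (dimvS (subvf _))) // dimvf /dim /= mul1n.
Qed.

Lemma isotropicS U V : (U <= V)%VS -> isotropic l V -> isotropic l U.
Proof. by move=> /subvP UV isoV u v /UV uV /UV vV; exact: isoV. Qed.

(* On vectors whose first l coordinates vanish the form is positive definite. *)
Lemma isotropic_vanish V u : isotropic l V -> u \in V ->
  (forall i : 'I_n, (i < l)%N -> u 0 i = 0) -> u = 0.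
Proof.
move=> isoV uV u_neg.
have norm_u : \sum_(i < n) u 0 i * (u 0 i)^* = 0.
  rewrite -[RHS](isoV u u uV uV) /herm_form; apply: eq_bigr => i _.
  by case: ifPn => [/u_neg ->|_]; rewrite ?mul1r // !(mulr0, mul0r).
apply/rowP => i; rewrite mxE; apply/eqP; rewrite -mul_conjC_eq0; apply/eqP.
exact: (psumr_eq0P (fun i _ => mul_conjC_ge0 (u 0 i)) norm_u).
Qed.

Lemma isotropic_dimv_le V : isotropic l V -> (\dim V <= l)%N.
Proof.
move=> isoV.
pose proj : 'Hom('rV[C]_n, 'rV[C]_l) :=
  linfun (mulmxr (\matrix_(i, j) (i == j :> nat)%:R)).
have ker0 : (V :&: lker proj = 0)%VS.
  apply/eqP; rewrite -subv0; apply/subvP => u; rewrite memv_cap memv_ker memv0.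
  case/andP => uV /eqP proj_u; apply/eqP/(isotropic_vanish isoV uV) => i il.
  have := congr1 (fun M : 'rV[C]_l => M 0 (Ordinal il)) proj_u.
  rewrite lfunE /= !mxE (bigD1 i) //= mxE eqxx mulr1 big1 ?addr0 // => k ki.
  by rewrite mxE [_ == _ :> nat](_ : _ = false) ?mulr0 //; apply: contraNF ki => /eqP/val_inj->.
rewrite -(limg_ker_dim proj V) ker0 dimv0 add0n.
by rewrite (leq_trans (dimvS (subvf _))) // dimvf /dim /= mul1n.
Qed.

Lemma isotropic_cap_orth_line F z : isotropic l F -> herm_form l z z = 0 ->
  isotropic l (F :&: orthv z + <[z]>).
Proof.
move=> isoF zz u v /memv_addP [a aFz [_ /vlineP [k ->] ->]].
move=> /memv_addP [b bFz [_ /vlineP [k' ->] ->]].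
move: aFz bFz; rewrite !memv_cap !memv_orth => /andP [aF /eqP az] /andP [bF /eqP bz].
rewrite herm_formDl !herm_formDr !herm_formZl !herm_formZr isoF //.
by rewrite az (herm_formC z b) bz zz rmorph0 !mulr0 !add0r.
Qed.

Lemma isotropic_exchange F W z :
  isotropic l F -> \dim F = l -> (W <= F)%VS -> herm_form l z z = 0 ->
  (forall w, w \in W -> herm_form l w z = 0) ->
  exists F', [/\ isotropic l F', \dim F' = l, (l - 1 <= \dim (F' :&: F))%N
                & (W + <[z]> <= F')%VS].
Proof.
move=> isoF dimF WF zz Wz.
have [zF | zNF] := boolP (z \in F).
  exists F; split=> //; first by rewrite capvv dimF leq_subr.
  by rewrite subv_add WF -memvE.
set K := (F :&: orthv z)%VS.
have isoKz := isotropic_cap_orth_line isoF zz.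
have dimK : (l <= (\dim K).+1)%N by rewrite -dimF dimv_cap_orth.
have dimKz : (\dim K < \dim (K + <[z]>))%N.
  rewrite (ltn_leqif (dimv_leqif_sup (addvSl K <[z]>))) subv_add subvv -memvE.
  by rewrite memv_cap (negbTE zNF).
exists (K + <[z]>)%VS; split=> //.
- by apply/eqP; rewrite eqn_leq isotropic_dimv_le //; exact: leq_trans dimKz.
- have : (K <= (K + <[z]>) :&: F)%VS by rewrite subv_cap addvSl capvSl.
  by move/dimvS; apply: leq_trans; rewrite leq_subLR add1n.
- rewrite subv_add addvSr andbT (subv_trans _ (addvSl _ _)) // subv_cap WF.
  by apply/subvP => w wW; rewrite memv_orth Wz.
Qed.

End HermForm.

Section Chain.
Variables (C : numClosedFieldType) (n l : nat) (E0 : {vspace 'rV[C]_n}).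
Hypotheses (isoE0 : isotropic l E0) (dimE0 : \dim E0 = l).

Lemma S_fam_isotropic j F : S_fam l E0 j F -> isotropic l F /\ \dim F = l.
Proof. by case: j => [/= ->|j [G [_ [isoF [dimF _]]]]]. Qed.

Lemma S_fam_succ j F : S_fam l E0 j F -> S_fam l E0 j.+1 F.
Proof.
move=> SF; have [isoF dimF] := S_fam_isotropic SF.
by exists F; do 3!split=> //; rewrite capvv dimF leq_subr.
Qed.

Lemma S_fam_cover_span j (s : seq 'rV[C]_n) :
  (size s <= j)%N -> isotropic l <<s>>%VS ->
  exists F, S_fam l E0 j F /\ (<<s>> <= F)%VS.
Proof.
elim: j s => [|j IH] [|z s] //= size_s iso_s.
- by exists E0; rewrite span_nil sub0v.
- have [F [SF _]] := IH [::] isT iso_s.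
  by exists F; rewrite span_nil sub0v; split=> //; exact: S_fam_succ.
move: iso_s; rewrite span_cons => iso_zs.
have zzs : z \in (<[z]> + <<s>>)%VS by rewrite memvE addvSl.
have [F [SF sF]] := IH s size_s (isotropicS (addvSr _ _) iso_zs).
have [isoF dimF] := S_fam_isotropic SF.
have [F' [isoF' dimF' capF' sF']] := isotropic_exchange isoF dimF sF
  (iso_zs z z zzs zzs) (fun w ws => iso_zs w z (subvP (addvSr _ _) w ws) zzs).
by exists F'; rewrite addvC; split=> //; exists F.
Qed.

End Chain.

Theorem lemma3p2 (C : numClosedFieldType) (p q l : nat)
  (hq : (0 < q)%N) (hqp : (q < p)%N) (hql : (q < l)%N)
  (hl2 : (l.*2 <= p + q)%N)
  (Z0 E0 : {vspace 'rV[C]_(p + q)})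
  (hZ0 : S_set l q p Z0) (hE0 : Lambda l l Z0 E0) :
  forall Z : {vspace 'rV[C]_(p + q)},
    (exists E, S_fam l E0 q E /\ Gr q E Z) <-> S_set l q p Z.
Proof.
(* Only the isotropy and dimension of E0 matter. *)
case: hE0 => isoE0 [dimE0 _] Z; split.
  case=> E [SE [dimZ ZE]]; have [isoE _] := S_fam_isotropic isoE0 dimE0 SE.
  by split=> //; exact: isotropicS isoE.
case=> dimZ isoZ.
have spanZ : <<vbasis Z>>%VS = Z := span_basis (vbasisP Z).
have size_basis : (size (vbasis Z) <= q)%N by rewrite size_tuple dimZ.
have iso_basis : isotropic l <<vbasis Z>>%VS by rewrite spanZ.
have [F [SF ZF]] := S_fam_cover_span isoE0 dimE0 size_basis iso_basis.
by exists F; do 2!split=> //; rewrite -spanZ.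
Qed.
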